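(* Let $E$ be a Banach lattice and $F$ a Dedekind complete Banach lattice, and let $\mathcal{P}$ be a linear subspace of $\mathrm{L}(E,F)$ satisfying the domination property. Then the set $\mathrm{r\text{-}}\mathcal{P}(E,F)$ of r-$\mathcal{P}$-operators is an order ideal in the Dedekind complete vector lattice $\mathrm{L}_r(E,F)$ of regular operators.
   Context: All vector spaces are real; $\mathrm{L}(E,F)$ is the space of bounded linear operators, ordered by $S\le T$ iff $T-S$ is positive; $\mathrm{L}_r(E,F)$ is the space of regular operators (differences of positive operators). An operator $T:E\to F$ is an r-$\mathcal{P}$-operator if $T=T_1-T_2$ with $T_1,T_2$ positive operators belonging to $\mathcal{P}$. $\mathcal{P}$ satisfies the domination property if $0\le S\le T\in\mathcal{P}$ implies $S\in\mathcal{P}$. *)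

(* Real Banach lattices are modelled as complete
   normed modules over a realType R, equipped with an order relation satisfying
   the vector-lattice axioms and the Banach-lattice norm compatibility. *)
From HB Require Import structures.
From mathcomp Require Import all_boot all_order all_algebra.
From mathcomp Require Import all_classical all_reals all_analysis.
Set Implicit Arguments. Unset Strict Implicit. Unset Printing Implicit Defensive.
Import Order.TTheory GRing.Theory Num.Theory.
Import numFieldNormedType.Exports.
Local Open Scope ring_scope.
Local Open Scope classical_set_scope.

Section Defs.
Variable R : realType.

Definition is_ub {T : Type} (le : T -> T -> Prop) (A : set T) (u : T) :=
  forall a, A a -> le a u.

Definition is_sup {T : Type} (le : T -> T -> Prop) (A : set T) (s : T) :=
  is_ub le A s /\ forall u, is_ub le A u -> le s u.

Definition is_sup2 {T : Type} (le : T -> T -> Prop) (x y s : T) :=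
  is_sup le [set x; y] s.

Definition partial_order {T : Type} (le : T -> T -> Prop) :=
  [/\ (forall x, le x x),
      (forall x y, le x y -> le y x -> x = y) &
      (forall x y z, le x y -> le y z -> le x z)].

Definition vector_lattice {V : lmodType R} (le : V -> V -> Prop) :=
  [/\ partial_order le,
      (forall x y z, le x y -> le (x + z) (y + z)),
      (forall (a : R) x y, 0 <= a -> le x y -> le (a *: x) (a *: y)) &
      (forall x y, exists s, is_sup2 le x y s)].

Definition is_modulus {V : lmodType R} (le : V -> V -> Prop) (x m : V) :=
  is_sup2 le x (- x) m.

Definition banach_lattice {E : completeNormedModType R} (le : E -> E -> Prop) :=
  vector_lattice le /\
  forall x y mx my, is_modulus le x mx -> is_modulus le y my ->
    le mx my -> `|x| <= `|y|.

Definition dedekind_complete {T : Type} (le : T -> T -> Prop) :=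
  forall A : set T, A !=set0 -> (exists u, is_ub le A u) -> exists s, is_sup le A s.

Section Operators.
Variables (E F : completeNormedModType R).
Variables (leE : E -> E -> Prop) (leF : F -> F -> Prop).

Definition linear_op (T : E -> F) :=
  forall (a : R) x y, T (a *: x + y) = a *: T x + T y.

Definition bounded_op (T : E -> F) :=
  linear_op T /\ exists M : R, forall x, `|T x| <= M * `|x|.

Definition positive_op (T : E -> F) :=
  forall x, leE 0 x -> leF 0 (T x).

Definition op_le (S T : E -> F) := positive_op (T \- S).

Definition op_subspace (P : set (E -> F)) :=
  [/\ P `<=` bounded_op, P (fun _ => 0),
      (forall S T, P S -> P T -> P (S \+ T)) &
      (forall (a : R) T, P T -> P (fun x => a *: T x))].

Definition domination_property (P : set (E -> F)) :=
  forall S T, bounded_op S -> positive_op S -> op_le S T -> P T -> P S.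

Definition regular_op (T : E -> F) :=
  exists T1 T2, [/\ bounded_op T1, positive_op T1, bounded_op T2,
                    positive_op T2 & T = T1 \- T2].

Definition r_P_op (P : set (E -> F)) (T : E -> F) :=
  exists T1 T2, [/\ P T1, positive_op T1, P T2, positive_op T2 & T = T1 \- T2].

(* M is the modulus |S| = S \/ (-S) computed in the ordered space L_r(E,F)
   (least upper bound of {S, -S} among regular operators, for the operator order) *)
Definition reg_modulus (S M : E -> F) :=
  [/\ regular_op M, op_le S M, op_le (\- S) M &
      forall U, regular_op U -> op_le S U -> op_le (\- S) U -> op_le M U].

Definition order_ideal_Lr (I : set (E -> F)) :=
  [/\ I `<=` regular_op, I (fun _ => 0),
      (forall S T, I S -> I T -> I (S \+ T)),
      (forall (a : R) T, I T -> I (fun x => a *: T x)) &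
      (forall S T mS mT, regular_op S -> I T -> reg_modulus S mS ->
         reg_modulus T mT -> op_le mS mT -> I S)].

End Operators.
End Defs.

From mathcomp Require Import all_boot all_order all_algebra.
From mathcomp Require Import all_classical all_reals all_analysis.
Import Order.TTheory GRing.Theory Num.Theory.
Import numFieldNormedType.Exports.
Set Implicit Arguments. Unset Strict Implicit.
Local Open Scope ring_scope.
Local Open Scope classical_set_scope.

(* Sums and scalar multiples of differences of positive operators in P are
   again such differences, since P is a subspace and the positive operators
   form a cone.  For solidity, let T = T1 - T2 with 0 <= T1, T2 in P.  Then
   T1 + T2 dominates T and -T, so |S| <= |T| <= T1 + T2; the positive and
   negative parts (|S| + S)/2 and (|S| - S)/2 of S are positive operators
   below T1 + T2, hence in P by the domination property, and S is their
   difference.  The moduli occurring in the solidity condition are given. *)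

Section PositiveCone.
Variables (R : realType) (F : lmodType R) (leF : F -> F -> Prop).
Hypothesis hF : vector_lattice leF.

Lemma pos_refl0 : leF 0 0.
Proof. by case: hF => [[refl _ _] _ _ _]. Qed.

Lemma pos_add (a b : F) : leF 0 a -> leF 0 b -> leF 0 (a + b).
Proof.
case: hF => [[_ _ trans] hadd _ _] ha hb.
by apply: trans hb _; have := hadd _ _ b ha; rewrite add0r.
Qed.

Lemma pos_scale (c : R) (a : F) : 0 <= c -> leF 0 a -> leF 0 (c *: a).
Proof. by case: hF => _ _ hsc _ hc ha; rewrite -(scaler0 _ c); apply: hsc. Qed.

End PositiveCone.

Section Operators.
Variables (R : realType) (E F : completeNormedModType R).
Variables (leE : E -> E -> Prop) (leF : F -> F -> Prop).

Lemma bounded_op_comb (a b : R) (S T : E -> F) :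
  bounded_op S -> bounded_op T -> bounded_op (fun x => a *: S x + b *: T x).
Proof.
move=> [linS [MS hMS]] [linT [MT hMT]]; split.
  move=> c x y; rewrite linS linT !scalerDr !scalerA [a * c]mulrC [b * c]mulrC.
  by rewrite -!scalerA addrACA.
exists (`|a| * MS + `|b| * MT) => x.
apply: le_trans (ler_normD _ _) _; rewrite !normrZ mulrDl -!mulrA.
by apply: lerD; apply: ler_wpM2l.
Qed.

Lemma bounded_opB (S T : E -> F) :
  bounded_op S -> bounded_op T -> bounded_op (S \- T).
Proof.
move=> bS bT; have := bounded_op_comb 1 (-1) bS bT.
by congr bounded_op; apply: funext => x /=; rewrite scale1r scaleN1r.
Qed.

Lemma regular_op_bounded (T : E -> F) : regular_op leE leF T -> bounded_op T.
Proof. by move=> [T1 [T2 [bT1 _ bT2 _ ->]]]; apply: bounded_opB. Qed.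

Hypothesis hF : vector_lattice leF.

Lemma positive_op0 : positive_op leE leF (fun _ => 0).
Proof. by move=> x _; apply: pos_refl0. Qed.

Lemma positive_opD (S T : E -> F) :
  positive_op leE leF S -> positive_op leE leF T -> positive_op leE leF (S \+ T).
Proof. by move=> pS pT x hx; apply: pos_add; [| apply: pS | apply: pT]. Qed.

Lemma positive_opZ (a : R) (T : E -> F) : 0 <= a ->
  positive_op leE leF T -> positive_op leE leF (fun x => a *: T x).
Proof. by move=> ha pT x hx; apply: pos_scale => //; apply: pT. Qed.

Lemma op_le_trans (S T U : E -> F) :
  op_le leE leF S T -> op_le leE leF T U -> op_le leE leF S U.
Proof.
move=> hST hTU x hx; have := pos_add hF (hTU x hx) (hST x hx).
by rewrite /= addrA subrK.
Qed.

Lemma op_le_sub_add (T1 T2 : E -> F) : positive_op leE leF T2 ->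
  op_le leE leF (T1 \- T2) (T1 \+ T2).
Proof.
move=> pT2 x hx; have := pos_add hF (pT2 x hx) (pT2 x hx).
by rewrite /= opprB addrA addrAC [T1 x + _]addrC addrK.
Qed.

Lemma reg_modulus_le_add (T1 T2 mT : E -> F) :
  bounded_op T1 -> positive_op leE leF T1 ->
  bounded_op T2 -> positive_op leE leF T2 ->
  reg_modulus leE leF (T1 \- T2) mT -> op_le leE leF mT (T1 \+ T2).
Proof.
move=> bT1 pT1 bT2 pT2 [_ _ _ mT_least]; apply: mT_least.
- exists (T1 \+ T2), (fun _ => 0); split.
  + by have := bounded_op_comb 1 1 bT1 bT2; congr bounded_op;
      apply: funext => x /=; rewrite !scale1r.
  + exact: positive_opD.
  + by split=> [a x y|]; [rewrite scaler0 addr0 | exists 0 => x; rewrite normr0 mul0r].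
  + exact: positive_op0.
  + by apply: funext => x /=; rewrite subr0.
- exact: op_le_sub_add.
- have -> : \- (T1 \- T2) = T2 \- T1 by apply: funext => x /=; rewrite opprB.
  have -> : T1 \+ T2 = T2 \+ T1 by apply: funext => x /=; rewrite addrC.
  exact: op_le_sub_add.
Qed.

Definition pos_part_op (S mS : E -> F) := fun x => 2^-1 *: mS x + 2^-1 *: S x.
Definition neg_part_op (S mS : E -> F) := fun x => 2^-1 *: mS x + (- 2^-1) *: S x.

Lemma half_ge0 : (0 : R) <= 2^-1.
Proof. by rewrite invr_ge0. Qed.

Lemma split_half (v : F) : v = 2^-1 *: v + 2^-1 *: v.
Proof. by rewrite -scalerDl -div1r -splitr scale1r. Qed.

Lemma pos_part_sub_neg_part (S mS : E -> F) :
  pos_part_op S mS \- neg_part_op S mS = S.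
Proof.
apply: funext => x; rewrite /= opprD addrACA subrr add0r scaleNr opprK.
by rewrite -split_half.
Qed.

Lemma positive_pos_part (S mS : E -> F) :
  op_le leE leF (\- S) mS -> positive_op leE leF (pos_part_op S mS).
Proof.
move=> hmS x hx; have := pos_scale hF half_ge0 (hmS x hx).
by rewrite /pos_part_op /= opprK scalerDr.
Qed.

Lemma positive_neg_part (S mS : E -> F) :
  op_le leE leF S mS -> positive_op leE leF (neg_part_op S mS).
Proof.
move=> hmS x hx; have := pos_scale hF half_ge0 (hmS x hx).
by rewrite /neg_part_op /= scalerBr scaleNr.
Qed.

Lemma pos_part_le (S mS : E -> F) :
  op_le leE leF S mS -> op_le leE leF (pos_part_op S mS) mS.
Proof.
move=> hmS x hx; have := pos_scale hF half_ge0 (hmS x hx).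
by rewrite /pos_part_op /= {2}[mS x]split_half scalerBr opprD addrACA subrr add0r.
Qed.

Lemma neg_part_le (S mS : E -> F) :
  op_le leE leF (\- S) mS -> op_le leE leF (neg_part_op S mS) mS.
Proof.
move=> hmS x hx; have := pos_scale hF half_ge0 (hmS x hx).
rewrite /neg_part_op /= {2}[mS x]split_half opprK scalerDr opprD addrACA subrr add0r.
by rewrite scaleNr opprK.
Qed.

Section RPOperators.
Variable P : set (E -> F).
Hypothesis hP : op_subspace P.

Lemma r_P_op_regular : r_P_op leE leF P `<=` regular_op leE leF.
Proof.
case: hP => Pb _ _ _ T [T1 [T2 [PT1 pT1 PT2 pT2 ->]]].
by exists T1, T2; split=> //; apply: Pb.
Qed.

Lemma r_P_op0 : r_P_op leE leF P (fun _ => 0).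
Proof.
case: hP => _ P0 _ _; exists (fun _ => 0), (fun _ => 0); split => //.
- exact: positive_op0.
- exact: positive_op0.
- by apply: funext => x /=; rewrite subr0.
Qed.

Lemma r_P_opD (S T : E -> F) :
  r_P_op leE leF P S -> r_P_op leE leF P T -> r_P_op leE leF P (S \+ T).
Proof.
case: hP => _ _ PD _ [S1 [S2 [PS1 pS1 PS2 pS2 ->]]] [T1 [T2 [PT1 pT1 PT2 pT2 ->]]].
exists (S1 \+ T1), (S2 \+ T2); split; try exact: PD; try exact: positive_opD.
by apply: funext => x /=; rewrite opprD addrACA.
Qed.

Lemma r_P_opZ (a : R) (T : E -> F) :
  r_P_op leE leF P T -> r_P_op leE leF P (fun x => a *: T x).
Proof.
case: hP => _ _ _ PZ [T1 [T2 [PT1 pT1 PT2 pT2 ->]]].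
have [a_ge0|a_lt0] := leP 0 a.
  exists (fun x => a *: T1 x), (fun x => a *: T2 x).
  split; try exact: PZ; try exact: positive_opZ.
  by apply: funext => x /=; rewrite scalerBr.
have Na_ge0 : 0 <= - a by rewrite oppr_ge0 ltW.
exists (fun x => (- a) *: T2 x), (fun x => (- a) *: T1 x).
split; try exact: PZ; try exact: positive_opZ.
by apply: funext => x /=; rewrite scalerBr !scaleNr opprK addrC.
Qed.

Hypothesis hdom : domination_property leE leF P.

Lemma r_P_op_solid (S T mS mT : E -> F) :
  regular_op leE leF S -> r_P_op leE leF P T ->
  reg_modulus leE leF S mS -> reg_modulus leE leF T mT ->
  op_le leE leF mS mT -> r_P_op leE leF P S.
Proof.
case: hP => Pb _ PD _ regS [T1 [T2 [PT1 pT1 PT2 pT2 ->]]] modS modT mS_le_mT.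
case: (modS) => [reg_mS S_le_mS NS_le_mS _].
have mS_le_sum : op_le leE leF mS (T1 \+ T2).
  by apply: op_le_trans mS_le_mT _; apply: reg_modulus_le_add modT => //; apply: Pb.
have P_sum : P (T1 \+ T2) by apply: PD.
have [bS bmS] := (regular_op_bounded regS, regular_op_bounded reg_mS).
exists (pos_part_op S mS), (neg_part_op S mS); split.
- apply: hdom P_sum; first exact: bounded_op_comb.
    exact: positive_pos_part.
  by apply: op_le_trans mS_le_sum; apply: pos_part_le.
- exact: positive_pos_part.
- apply: hdom P_sum; first exact: bounded_op_comb.
    exact: positive_neg_part.
  by apply: op_le_trans mS_le_sum; apply: neg_part_le.
- exact: positive_neg_part.
- by rewrite pos_part_sub_neg_part.
Qed.

End RPOperators.
End Operators.

Theorem proposition3p5 (R : realType) (E F : completeNormedModType R)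
  (leE : E -> E -> Prop) (leF : F -> F -> Prop)
  (hE : banach_lattice leE) (hF : banach_lattice leF)
  (hFd : dedekind_complete leF)
  (P : set (E -> F))
  (hP : op_subspace P) (hdom : domination_property leE leF P) :
  order_ideal_Lr leE leF (r_P_op leE leF P).
Proof.
have hFv : vector_lattice leF := hF.1.
split.
- exact: (r_P_op_regular hP).
- exact: (r_P_op0 leE hFv hP).
- exact: (r_P_opD hFv hP).
- exact: (r_P_opZ hFv hP).
- exact: (r_P_op_solid hFv hP hdom).
Qed.
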